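(* Let $d\ge2$, $p>p_c(d)$, $\vec\ell\in S^{d-1}$, $\lambda>0$ and $\alpha>d+3$. There is a constant $c>0$ such that for every $L\ge1$ and every configuration $\omega$ with $0\in K_\infty$, \[ \Lambda_\omega(B(L,L^\alpha))\geq cL^{-2d\alpha}e^{-2\lambda\,\mathcal{B}\mathcal{K}(L,L^\alpha)}. \]
   Context: $\omega$ is a bond percolation configuration on $E(\mathbb{Z}^d)$ with unique infinite open cluster $K_\infty$. With $\ell=\lambda\vec\ell$, open edges $[x,y]$ have conductance $c^\omega([x,y])=e^{(x+y)\cdot\ell}$, closed ones $0$; $\pi^\omega(x)=\sum_{y\sim x}c^\omega(x,y)$. Let $f_1=\vec\ell,\dots,f_d$ be an orthonormal basis of $\mathbb{R}^d$, $B(L,L')=\{z\in\mathbb{Z}^d:|z\cdot\vec\ell|<L,\ |z\cdot f_i|<L'\ (2\le i\le d)\}$. Dirichlet form $\mathcal{E}(f,f)=\frac12\sum_{|x-y|=1}(f(y)-f(x))^2c^\omega([x,y])$. $\Lambda_\omega(B)=\inf\{\mathcal{E}(f,f): f=0 \text{ off } B\cap K_\infty,\ \|f\|_{L^2(\pi^\omega)}=1\}$ if $B\cap K_\infty\ne\emptyset$ and $\Lambda_\omega(B)=\infty$ otherwise. $\mathcal{B}\mathcal{K}(x)=0$ if $x\notin K_\infty$, otherwise $\min$ over infinite open self-avoiding paths $\pi$ from $x$ of $\max_i(x-\pi(i))\cdot\vec\ell$; $\mathcal{B}\mathcal{K}(L,L^\alpha)=\max_{x\in B(L,L^\alpha)}\mathcal{B}\mathcal{K}(x)$.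 *)

From HB Require Import structures.
From mathcomp Require Import all_boot all_order all_algebra.
From mathcomp Require Import all_classical all_reals all_analysis.
Set Implicit Arguments. Unset Strict Implicit. Unset Printing Implicit Defensive.
Import Order.TTheory GRing.Theory Num.Theory.
Local Open Scope classical_set_scope.
Local Open Scope ring_scope.

Definition Zd (d : nat) := 'rV[int]_d.

Definition unitv d (i : 'I_d) : Zd d := delta_mx 0 i.

Definition adj d (x y : Zd d) : bool :=
  [exists i : 'I_d, (y == x + unitv i) || (y == x - unitv i)].

(* A bond configuration: omega x y = edge [x,y] is open (only meaningful for
   neighbours; required to be symmetric, i.e. a function of the unordered edge). *)
Definition config d := Zd d -> Zd d -> bool.

Definition sym_config d (omega : config d) := forall x y, omega x y = omega y x.

Definition open_edge d (omega : config d) : rel (Zd d) :=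
  fun x y => adj x y && omega x y.

Definition connected d (omega : config d) (x y : Zd d) : Prop :=
  exists s : seq (Zd d), path (open_edge omega) x s /\ last x s = y.

Definition cluster d (omega : config d) (x : Zd d) : set (Zd d) :=
  [set y | connected omega x y].

Definition Kinf d (omega : config d) : set (Zd d) :=
  [set x | ~ finite_set (cluster omega x)].

Definition unique_inf_cluster d (omega : config d) : Prop :=
  forall x y, Kinf omega x -> Kinf omega y -> connected omega x y.

Definition dotZ {R : realType} d (z : Zd d) (v : 'rV[R]_d) : R :=
  \sum_(i < d) (z 0 i)%:~R * v 0 i.
Definition dotR {R : realType} d (u v : 'rV[R]_d) : R :=
  \sum_(i < d) u 0 i * v 0 i.

Definition on_sphere {R : realType} d (v : 'rV[R]_d) := dotR v v = 1.

Definition orthonormal_fam {R : realType} d (f : 'I_d -> 'rV[R]_d) :=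
  forall i j, dotR (f i) (f j) = (i == j)%:R.

(* conductance c^omega([x,y]) with ell = lam * ellv *)
Definition cond {R : realType} d (omega : config d) (lam : R) (ellv : 'rV[R]_d)
  (x y : Zd d) : R :=
  if open_edge omega x y then expR (lam * dotZ (x + y) ellv) else 0.

Definition piw {R : realType} d (omega : config d) (lam : R) (ellv : 'rV[R]_d)
  (x : Zd d) : R :=
  \sum_(i < d) (cond omega lam ellv x (x + unitv i) + cond omega lam ellv x (x - unitv i)).

(* B(L,L') with f_1 = f ord-0 = ellv *)
Definition box {R : realType} d (ellv : 'rV[R]_d) (f : 'I_d -> 'rV[R]_d) (L L' : R)
  : set (Zd d) :=
  [set z | `|dotZ z ellv| < L /\ forall i : 'I_d, (0 < val i)%N -> `|dotZ z (f i)| < L'].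

(* Dirichlet form: 1/2 sum over ordered neighbouring pairs (x,y) *)
Definition dirichlet {R : realType} d (omega : config d) (lam : R) (ellv : 'rV[R]_d)
  (g : Zd d -> R) : \bar R :=
  ((2^-1)%:E * \esum_(x in [set: Zd d])
     (\sum_(i < d) ((g (x + unitv i) - g x) ^+ 2 * cond omega lam ellv x (x + unitv i)
                  + (g (x - unitv i) - g x) ^+ 2 * cond omega lam ellv x (x - unitv i)))%:E)%E.

Definition L2pi {R : realType} d (omega : config d) (lam : R) (ellv : 'rV[R]_d)
  (g : Zd d -> R) : \bar R :=
  \esum_(x in [set: Zd d]) (g x ^+ 2 * piw omega lam ellv x)%:E.

Definition Lambda {R : realType} d (omega : config d) (lam : R) (ellv : 'rV[R]_d)
  (B : set (Zd d)) : \bar R :=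
  if `[< B `&` Kinf omega !=set0 >] then
    ereal_inf [set dirichlet omega lam ellv g | g in
      [set g : Zd d -> R | (forall x, ~ (B x /\ Kinf omega x) -> g x = 0)
                           /\ L2pi omega lam ellv g = 1%E]]
  else +oo%E.

Definition inf_sa_path d (omega : config d) (x : Zd d) (pth : nat -> Zd d) : Prop :=
  pth 0%N = x /\ injective pth /\ forall n, open_edge omega (pth n) (pth n.+1).

Definition BK {R : realType} d (omega : config d) (ellv : 'rV[R]_d) (x : Zd d) : \bar R :=
  if `[< Kinf omega x >] then
    ereal_inf [set ereal_sup [set (dotZ (x - pth n) ellv)%:E | n in [set: nat]]
              | pth in inf_sa_path omega x]
  else 0%E.

Definition BKbox {R : realType} d (omega : config d) (ellv : 'rV[R]_d)
  (f : 'I_d -> 'rV[R]_d) (L L' : R) : \bar R :=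
  ereal_sup [set BK omega ellv x | x in box ellv f L L'].

From HB Require Import structures.
From mathcomp Require Import all_boot all_order all_algebra.
From mathcomp Require Import all_classical all_reals all_analysis.
From mathcomp Require Import zify ring lra.
Set Implicit Arguments. Unset Strict Implicit.
Import Order.TTheory GRing.Theory Num.Theory.
Local Open Scope classical_set_scope.
Local Open Scope ring_scope.

(* Let g vanish off B = B(L, L^alpha) with ||g||_{L^2(pi)} = 1 and let x be a
   point of B in the infinite cluster.  Follow an infinite open self-avoiding
   path from x that never drops more than BK(x) + 1 below x in direction ell.
   Being injective, it leaves B after at most |B| steps, where g = 0; by
   Cauchy-Schwarz and since every conductance on the path is at least
   exp(2 lam (x.ell - BK(x) - 1)) while pi(x) <= 2d exp(lam (2 x.ell + 1)),
   we get g(x)^2 pi(x) <= 2d |B| e^{lam (2 BK + 3)} E(g,g).  Summing over B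
   gives 1 <= 2d |B|^2 e^{lam (2 BK + 3)} E(g,g), and |B| = O(L^{alpha d}). *)

Section DotZ.
Variables (R : realType) (d : nat).
Implicit Types (x y : Zd d) (v : 'rV[R]_d).

Lemma dotZD x y v : dotZ (x + y) v = dotZ x v + dotZ y v.
Proof.
by rewrite /dotZ -big_split /=; apply: eq_bigr => i _; rewrite mxE intrD mulrDl.
Qed.

Lemma dotZN x v : dotZ (- x) v = - dotZ x v.
Proof. by rewrite /dotZ -sumrN; apply: eq_bigr => i _; rewrite mxE intrN mulNr. Qed.

Lemma dotZB x y v : dotZ (x - y) v = dotZ x v - dotZ y v.
Proof. by rewrite dotZD dotZN. Qed.

Lemma dot0Z v : dotZ 0 v = 0.
Proof. by rewrite /dotZ big1 // => i _; rewrite mxE mul0r. Qed.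

Lemma dotZ_unitv (i : 'I_d) v : dotZ (unitv i) v = v 0 i.
Proof.
rewrite /dotZ (bigD1 i) //= big1 ?addr0 => [|j ji].
  by rewrite /unitv mxE !eqxx mul1r.
by rewrite /unitv mxE eqxx (negbTE ji) mul0r.
Qed.

Lemma unit_coord_le1 v (j : 'I_d) : dotR v v = 1 -> `|v 0 j| <= 1.
Proof.
move=> v1; have vj2 : v 0 j ^+ 2 <= 1.
  rewrite -v1 /dotR (bigD1 j) //= -expr2 lerDl.
  by apply: sumr_ge0 => i _; rewrite -expr2 sqr_ge0.
by rewrite -(@ler_pXn2r _ 2) ?nnegrE // expr1n real_normK ?num_real.
Qed.

End DotZ.

Section Conductances.
Variables (R : realType) (d : nat) (omega : config d) (lam : R) (ellv : 'rV[R]_d).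
Hypotheses (lam_ge0 : 0 <= lam) (ellv_unit : dotR ellv ellv = 1).
Implicit Types (x y : Zd d).

Lemma cond_ge0 x y : 0 <= cond omega lam ellv x y.
Proof. by rewrite /cond; case: ifP => _ //; exact: expR_ge0. Qed.

Lemma cond_le_expR x y : cond omega lam ellv x y <= expR (lam * dotZ (x + y) ellv).
Proof. by rewrite /cond; case: ifP => _ //; exact: expR_ge0. Qed.

Lemma piw_ge0 x : 0 <= piw omega lam ellv x.
Proof. by apply: sumr_ge0 => i _; rewrite addr_ge0 ?cond_ge0. Qed.

(* Each neighbour y of x has y.ell <= x.ell + 1 since |ell_i| <= 1. *)
Lemma piw_le x : piw omega lam ellv x <= (2 * d)%:R * expR (lam * (2 * dotZ x ellv + 1)).
Proof.
set E := expR _; have -> : (2 * d)%:R * E = \sum_(i < d) (E + E).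
  by rewrite sumr_const card_ord -mulr2n -mulrnA mulr_natl.
apply: ler_sum => i _; have := unit_coord_le1 i ellv_unit; rewrite ler_norml.
case/andP=> lo hi; apply: lerD; apply: le_trans (cond_le_expR _ _) _;
  rewrite ler_expR ler_wpM2l // !(dotZD, dotZN) dotZ_unitv; lra.
Qed.

End Conductances.

Section Box.
Variables (R : realType) (d : nat) (ellv : 'rV[R]_d) (f : 'I_d -> 'rV[R]_d).
Hypotheses (f_orthonormal : orthonormal_fam f)
           (f0_ellv : forall i : 'I_d, val i = 0%N -> f i = ellv).

(* The rows of an orthogonal matrix are orthonormal, hence so are its columns. *)
Lemma orthonormal_fam_sum_coord (k j : 'I_d) :
  \sum_(i < d) f i 0 k * f i 0 j = (k == j)%:R.
Proof.
pose F := \matrix_(i < d, k < d) f i 0 k.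
have FFT : F *m F^T = 1%:M.
  by apply/matrixP => i i'; rewrite !mxE -f_orthonormal; apply: eq_bigr => l _; rewrite !mxE.
have /matrixP/(_ k j) := mulmx1C FFT; rewrite !mxE => <-.
by apply: eq_bigr => l _; rewrite !mxE.
Qed.

Lemma box_coord_lt (L L' : R) z : L <= L' -> box ellv f L L' z ->
  forall j : 'I_d, `|(z 0 j)%:~R : R| < d%:R * L'.
Proof.
move=> LL' [z_ellv z_f] j.
have -> : (z 0 j)%:~R = \sum_(i < d) dotZ z (f i) * f i 0 j :> R.
  rewrite /dotZ; under eq_bigr do rewrite mulr_suml; rewrite exchange_big /=.
  under eq_bigr do under eq_bigr do rewrite -mulrA.
  under eq_bigr do rewrite -mulr_sumr orthonormal_fam_sum_coord.
  rewrite (bigD1 j) //= eqxx mulr1 big1 ?addr0 // => k kj.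
  by rewrite (negbTE kj) mulr0.
apply: le_lt_trans (ler_norm_sum _ _ _) _.
rewrite -[d in d%:R]card_ord mulr_natl -sumr_const; apply: ltr_sum => [|i _].
  by apply/hasP; exists j; rewrite ?mem_index_enum.
have fi_coord : `|f i 0 j| <= 1 by apply: unit_coord_le1; rewrite f_orthonormal eqxx.
have z_fi : `|dotZ z (f i)| < L'.
  have [i0|] := posnP (val i); last exact: z_f.
  by rewrite f0_ellv //; apply: lt_le_trans LL'.
by rewrite normrM; apply: le_lt_trans z_fi; rewrite ler_piMr.
Qed.

(* The box lies in the cube [-N, N]^d with N = floor (d L'). *)
Lemma box_sub_seq (L L' : R) : L <= L' -> 1 <= L' ->
  exists s : seq (Zd d), [/\ uniq s, (size s)%:R <= ((2 * d + 3)%:R * L') ^+ d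
                           & box ellv f L L' `<=` [set` s]].
Proof.
move=> LL' L'1; have L'0 : 0 <= L' by apply: le_trans L'1.
have D0 : 0 <= d%:R * L' by rewrite mulr_ge0.
set N := Num.Def.trunc (d%:R * L'); have /andP[ND DN] := truncn_itv D0.
pose T := {ffun 'I_d -> 'I_N.*2.+1}.
pose phi (h : T) : Zd d := \row_j ((h j : nat)%:Z - N%:Z).
have phi_inj : injective phi.
  move=> h1 h2 /matrixP e; apply/ffunP => j; apply/val_inj.
  by have := e 0 j; rewrite !mxE => /addIr [].
exists (map phi (enum T)); split.
- by rewrite map_inj_uniq ?enum_uniq.
- rewrite size_map -cardE card_ffun !card_ord natrX lerXn2r ?nnegrE ?mulr_ge0 //.
  by rewrite -addn1 -mul2n !natrD ?natrM; lra.
move=> z Bz.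
have zj_le j : (- N%:Z <= z 0 j <= N%:Z)%R.
  have := lt_trans (box_coord_lt LL' Bz j) DN.
  by rewrite -intr_norm -[N.+1%:R]/((N.+1)%:Z%:~R : R) ltr_int => ?; apply/andP; split; lia.
pose h : T := [ffun j => inord (absz (z 0 j + N%:Z))].
suff <- : phi h = z by rewrite /= mem_map // mem_enum.
apply/matrixP => i j; rewrite !mxE (ord1 i) ffunE.
by have /andP[lo hi] := zj_le j; rewrite inordK; [rewrite gez0_abs; lia | lia].
Qed.

End Box.

Lemma injective_exits_seq (T : eqType) (p : nat -> T) (s : seq T) :
  injective p -> exists2 n, (n <= size s)%N & p n \notin s.
Proof.
move=> p_inj; apply: contrapT => no_exit.
have sub : {subset map p (iota 0 (size s).+1) <= s}.
  move=> y /mapP[n]; rewrite mem_iota add0n ltnS => /andP[_ n_le] ->.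
  by apply: contrapT => /negP pn; apply: no_exit; exists n.
have := uniq_leq_size _ sub; rewrite map_inj_uniq // iota_uniq => /(_ isT).
by rewrite size_map size_iota ltnn.
Qed.

Lemma sqr_sum_le (R : realFieldType) (u : nat -> R) n :
  (\sum_(k < n) u k) ^+ 2 <= n%:R * \sum_(k < n) u k ^+ 2.
Proof.
elim: n => [|n IH]; first by rewrite !big_ord0 expr0n mul0r.
rewrite !big_ord_recr /= -natr1.
have [->|n_gt0] := posnP n; first by rewrite !big_ord0 !add0r mul1r.
set S := \sum_(i < n) u i in IH *; set Q := \sum_(i < n) u i ^+ 2 in IH *; set a := u n.
have Q0 : 0 <= Q by apply: sumr_ge0 => i _; rewrite sqr_ge0.
have cross : 2 * S * a <= Q + n%:R * a ^+ 2.
  have sq_ge0 : 0 <= (S - n%:R * a) ^+ 2 by rewrite sqr_ge0.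
  have n_pos : 0 < n%:R :> R by rewrite ltr0n.
  by rewrite -(ler_pM2l n_pos); nra.
nra.
Qed.

Lemma BK_ge0 (R : realType) d (omega : config d) (ellv : 'rV[R]_d) x :
  (0 <= BK omega ellv x)%E.
Proof.
rewrite /BK; case: asboolP => // _; apply: le_ereal_inf_tmp => _ [p [p0 _] <-].
by apply: ereal_sup_ge; exists 0%:E; [exists 0%N; rewrite ?p0 ?subrr ?dot0Z|].
Qed.

Lemma BK_le_exists_path (R : realType) d (omega : config d) (ellv : 'rV[R]_d) x (r : R) :
  Kinf omega x -> (BK omega ellv x <= r%:E)%E ->
  exists2 p, inf_sa_path omega x p & forall n, dotZ x ellv - (r + 1) < dotZ (p n) ellv.
Proof.
rewrite /BK => Kx; rewrite asboolT // => BKx.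
have r_lt : (r%:E < (r + 1)%:E)%E by rewrite lte_fin ltrDl.
have [_ [p p_path <-] p_sup] := ereal_inf_lt (le_lt_trans BKx r_lt).
exists p => // n; have : ((dotZ (x - p n) ellv)%:E < (r + 1)%:E)%E.
  by apply: le_lt_trans p_sup; apply: ereal_sup_ubound; exists n.
by rewrite lte_fin dotZB; lra.
Qed.

Section Energy.
Variables (R : realType) (d : nat) (omega : config d) (lam : R) (ellv : 'rV[R]_d).
Hypotheses (lam_ge0 : 0 <= lam) (ellv_unit : dotR ellv ellv = 1).
Variable g : Zd d -> R.
Implicit Types (x y : Zd d).

Definition energy_at x : R :=
  \sum_(i < d) ((g (x + unitv i) - g x) ^+ 2 * cond omega lam ellv x (x + unitv i)
              + (g (x - unitv i) - g x) ^+ 2 * cond omega lam ellv x (x - unitv i)).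

Local Notation energy := (\esum_(x in [set: Zd d]) (energy_at x)%:E)%E.

Lemma dirichletE : dirichlet omega lam ellv g = ((2^-1)%:E * energy)%E.
Proof. by []. Qed.

Lemma edge_term_ge0 x y : 0 <= (g y - g x) ^+ 2 * cond omega lam ellv x y.
Proof. by rewrite mulr_ge0 ?sqr_ge0 ?cond_ge0. Qed.

Lemma energy_at_ge0 x : 0 <= energy_at x.
Proof. by apply: sumr_ge0 => i _; rewrite addr_ge0 ?edge_term_ge0. Qed.

Lemma energy_ge0 : (0 <= energy)%E.
Proof. by apply: esum_ge0 => x _; rewrite lee_fin energy_at_ge0. Qed.

Lemma edge_energy_le x y : open_edge omega x y ->
  (g y - g x) ^+ 2 * cond omega lam ellv x y <= energy_at x.
Proof.
case/andP=> /existsP[i /orP[]/eqP ->] _; rewrite /energy_at (bigD1 i) //=;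
  set rest := \sum_(j < d | _) _;
  have : 0 <= rest by apply: sumr_ge0 => j _; rewrite addr_ge0 ?edge_term_ge0.
  by have := edge_term_ge0 x (x - unitv i); lra.
by have := edge_term_ge0 x (x + unitv i); lra.
Qed.

Lemma sum_energy_at_le (p : nat -> Zd d) n :
  injective p -> ((\sum_(k < n) energy_at (p k))%:E <= energy)%E.
Proof.
move=> p_inj; apply: esum_ge; exists (p @` `I_n).
  by split => //; apply: finite_image; exact: finite_II.
rewrite fsbig_image; last by move=> a b _ _; apply: p_inj.
by rewrite -fsbig_ord sumEFin.
Qed.

(* Walk from x along an infinite open path that stays above x.ell - BK(x) - 1:
   it leaves s within size s steps, where g vanishes, and every conductance on
   the way is at least exp(2 lam (x.ell - r - 1)). *)
Lemma sqr_mul_piw_le (s : seq (Zd d)) x (r E : R) :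
  (forall z, z \notin s -> g z = 0) -> Kinf omega x -> (BK omega ellv x <= r%:E)%E ->
  (energy <= E%:E)%E ->
  g x ^+ 2 * piw omega lam ellv x <= (size s)%:R * E * (2 * d)%:R * expR (lam * (2 * r + 3)).
Proof.
move=> g_out Kx BKx energy_le.
have [p [p0 [p_inj p_open]] p_above] := BK_le_exists_path Kx BKx.
have [n n_le pn_out] := injective_exits_seq s p_inj.
pose u k := g (p k.+1) - g (p k).
have gx : g x = - \sum_(k < n) u k.
  by rewrite -(big_mkord xpredT u) telescope_sumr // (g_out _ pn_out) p0 sub0r opprK.
pose cmin := expR (lam * (2 * (dotZ x ellv - (r + 1)))).
have cond_ge k : cmin <= cond omega lam ellv (p k) (p k.+1).
  rewrite /cond p_open ler_expR ler_wpM2l // dotZD.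
  by have := p_above k; have := p_above k.+1; lra.
have path_energy : cmin * \sum_(k < n) u k ^+ 2 <= E.
  rewrite -lee_fin; apply: le_trans energy_le; apply: le_trans (sum_energy_at_le n p_inj).
  rewrite lee_fin mulr_sumr; apply: ler_sum => k _.
  by apply: le_trans (edge_energy_le (p_open k)); rewrite mulrC ler_wpM2l ?sqr_ge0.
have gx2 : g x ^+ 2 <= (size s)%:R * \sum_(k < n) u k ^+ 2.
  rewrite gx sqrrN; apply: le_trans (sqr_sum_le u n) _.
  by rewrite ler_wpM2r ?ler_nat // sumr_ge0 // => k _; rewrite sqr_ge0.
have piw_x : piw omega lam ellv x <= (2 * d)%:R * (cmin * expR (lam * (2 * r + 3))).
  rewrite /cmin -expRD -mulrDr.
  have -> : 2 * (dotZ x ellv - (r + 1)) + (2 * r + 3) = 2 * dotZ x ellv + 1 by lra.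
  exact: piw_le.
apply: le_trans (ler_pM (sqr_ge0 _) (piw_ge0 _ _ _ _) gx2 piw_x) _.
set M := (size s)%:R; set S2 := \sum_(k < n) _; set D := (2 * d)%:R; set X := expR _.
rewrite [leLHS](_ : _ = M * (cmin * S2) * D * X); last by ring.
by rewrite ler_wpM2r ?expR_ge0 // ler_wpM2r // ler_wpM2l.
Qed.

Lemma L2pi_le (B : set (Zd d)) (s : seq (Zd d)) (r E : R) :
  uniq s -> B `<=` [set` s] -> (forall x, ~ (B x /\ Kinf omega x) -> g x = 0) ->
  (forall x, B x -> (BK omega ellv x <= r%:E)%E) -> (energy <= E%:E)%E ->
  (L2pi omega lam ellv g
     <= ((size s)%:R ^+ 2 * E * (2 * d)%:R * expR (lam * (2 * r + 3)))%:E)%E.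
Proof.
move=> s_uniq Bs g_off BK_r energy_le.
have g_out z : z \notin s -> g z = 0.
  by move=> /negP zs; apply: g_off => -[/Bs].
have E0 : 0 <= E by rewrite -lee_fin (le_trans energy_ge0).
set Q := (size s)%:R * E * (2 * d)%:R * expR (lam * (2 * r + 3)).
have pointwise x : g x ^+ 2 * piw omega lam ellv x <= Q.
  have [[Bx Kx]|nBK] := pselect (B x /\ Kinf omega x).
    exact: sqr_mul_piw_le g_out Kx (BK_r x Bx) energy_le.
  by rewrite g_off // expr0n mul0r /Q !mulr_ge0 ?expR_ge0.
rewrite /L2pi (_ : \esum_(x in _) _ = \esum_(x in [set` s]) (g x ^+ 2 * piw omega lam ellv x)%:E).
  rewrite (esum_fset (finite_seq s)) => [|x _]; last by rewrite lee_fin mulr_ge0 ?sqr_ge0 ?piw_ge0.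
  rewrite -fsbig_seq // sumEFin lee_fin; apply: le_trans (ler_sum _ (fun x _ => pointwise x)) _.
  by rewrite big_const_seq count_predT iter_addr_0 -[Q *+ _]mulr_natl /Q expr2 !mulrA.
rewrite [RHS]esum_mkcond; apply: eq_esum => x _; case: ifPn => // xs.
by rewrite g_out ?expr0n ?mul0r //; apply: contra xs => xs; rewrite inE.
Qed.

End Energy.

Section Eigenvalue.
Variables (R : realType) (d : nat) (omega : config d) (lam : R) (ellv : 'rV[R]_d).

Lemma Lambda_ge0 (B : set (Zd d)) : (0 <= Lambda omega lam ellv B)%E.
Proof.
rewrite /Lambda; case: asboolP => // _; apply: le_ereal_inf_tmp => _ [g _ <-].
by rewrite dirichletE mule_ge0 ?energy_ge0 // lee_fin invr_ge0.
Qed.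

Lemma Lambda_ge (B : set (Zd d)) (s : seq (Zd d)) (r : R) :
  0 <= lam -> dotR ellv ellv = 1 -> uniq s -> B `<=` [set` s] ->
  (forall x, B x -> (BK omega ellv x <= r%:E)%E) ->
  ((((4 * d)%:R * (size s)%:R ^+ 2 * expR (3 * lam))^-1 * expR (- (2 * lam) * r))%:E
     <= Lambda omega lam ellv B)%E.
Proof.
move=> lam_ge0 ellv_unit s_uniq Bs BK_r.
rewrite /Lambda; case: asboolP => _; last exact: leey.
apply: le_ereal_inf_tmp => _ [g [g_off L2g] <-]; rewrite dirichletE.
case E_eq: (\esum_(x in _) _)%E (energy_ge0 omega lam ellv g) => [E| |] // _; last first.
  by rewrite gt0_muley ?leey // lte_fin invr_gt0.
have energy_le : (\esum_(x in [set: Zd d]) (energy_at omega lam ellv g x)%:E <= E%:E)%E.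
  by rewrite E_eq.
have := L2pi_le lam_ge0 ellv_unit s_uniq Bs g_off BK_r energy_le.
rewrite L2g lee_fin -EFinM lee_fin.
set M := (size s)%:R; set D := (2 * d)%:R; set Y := expR (3 * lam); set X := expR (2 * lam * r).
have -> : expR (lam * (2 * r + 3)) = Y * X by rewrite -expRD; congr expR; ring.
have -> : expR (- (2 * lam) * r) = X^-1 by rewrite mulNr expRN.
have -> : (4 * d)%:R = 2 * D by rewrite /D -natrM mulnA.
set P := D * M ^+ 2 * Y; rewrite (_ : M ^+ 2 * E * D * (Y * X) = P * X * E); last by rewrite /P; ring.
move=> one_le; have X_gt0 : 0 < X by exact: expR_gt0.
have P_neq0 : P != 0 by apply: contraTneq one_le => ->; rewrite !mul0r ler10.
have P_ge0 : 0 <= P by rewrite !mulr_ge0 ?sqr_ge0 ?expR_ge0.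
have -> : 2 * D * M ^+ 2 * Y = 2 * P by rewrite /P; ring.
apply: le_trans (ler_peMr _ one_le) _.
  by apply: divr_ge0; [rewrite invr_ge0 mulr_ge0 | exact: ltW].
rewrite [leLHS](_ : _ = 2^-1 * E) //; field.
by rewrite P_neq0 gt_eqF.
Qed.
End Eigenvalue.

Lemma BKbox_ge0 (R : realType) d (omega : config d) (ellv : 'rV[R]_d)
  (f : 'I_d -> 'rV[R]_d) (L L' : R) :
  box ellv f L L' 0 -> (0 <= BKbox omega ellv f L L')%E.
Proof.
by move=> B0; apply: ereal_sup_ge; exists (BK omega ellv 0); [exists 0 | exact: BK_ge0].
Qed.

Lemma box0 (R : realType) d (ellv : 'rV[R]_d) (f : 'I_d -> 'rV[R]_d) (L L' : R) :
  0 < L -> 0 < L' -> box ellv f L L' 0.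
Proof. by move=> L_gt0 L'_gt0; split=> [|i _]; rewrite dot0Z normr0. Qed.

Lemma Lambda_box_ge (R : realType) d (omega : config d) (lam : R) (ellv : 'rV[R]_d)
  (f : 'I_d -> 'rV[R]_d) (L L' r : R) :
  (0 < d)%N -> orthonormal_fam f -> (forall i : 'I_d, val i = 0%N -> f i = ellv) ->
  0 <= lam -> dotR ellv ellv = 1 -> 0 < L -> L <= L' -> 1 <= L' ->
  (BKbox omega ellv f L L' <= r%:E)%E ->
  ((((4 * d)%:R * ((2 * d + 3)%:R ^+ d) ^+ 2 * expR (3 * lam))^-1 * (L' ^+ d ^+ 2)^-1
      * expR (- (2 * lam) * r))%:E <= Lambda omega lam ellv (box ellv f L L'))%E.
Proof.
move=> d_gt0 f_orth f0_ellv lam_ge0 ellv_unit L_gt0 LL' L'_ge1 BK_r.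
have L'_gt0 : 0 < L' by apply: lt_le_trans ltr01 L'_ge1.
have [s [s_uniq s_size Bs]] := box_sub_seq f_orth f0_ellv LL' L'_ge1.
have BK_x x : box ellv f L L' x -> (BK omega ellv x <= r%:E)%E.
  by move=> Bx; apply: le_trans BK_r; apply: ereal_sup_ubound; exists x.
apply: le_trans (Lambda_ge lam_ge0 ellv_unit s_uniq Bs BK_x).
have s_gt0 : (0 < size s)%N.
  by rewrite lt0n size_eq0; apply: contraTneq (Bs 0 (box0 ellv f L_gt0 L'_gt0)) => ->.
set K : R := (2 * d + 3)%:R ^+ d.
have K_gt0 : 0 < K by rewrite exprn_gt0 // ltr0n addn3.
rewrite lee_fin ler_wpM2r ?expR_ge0 // -invfM lef_pV2 ?posrE
  ?mulr_gt0 ?exprn_gt0 ?expR_gt0 ?ltr0n ?muln_gt0 ?addn3 //.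
have s2_le : (size s)%:R ^+ 2 <= K ^+ 2 * L' ^+ d ^+ 2.
  have s_le : (size s)%:R <= K * L' ^+ d by rewrite /K -exprMn.
  by rewrite -exprMn lerXn2r ?nnegrE // mulr_ge0 ?exprn_ge0 ?(ltW K_gt0) ?(ltW L'_gt0).
set D := (4 * d)%:R; set Y := expR (3 * lam).
rewrite [leRHS](_ : _ = D * (K ^+ 2 * L' ^+ d ^+ 2) * Y); last by ring.
by apply: ler_wpM2r; [exact: expR_ge0 | exact: ler_wpM2l].
Qed.

Lemma powRN_mul2n (R : realType) (L a : R) (n : nat) : 0 <= L ->
  L `^ (- (2 * n%:R * a)) = ((L `^ a) ^+ n ^+ 2)^-1.
Proof.
move=> L_ge0; rewrite powRN (_ : 2 * n%:R * a = a * n%:R * 2%:R); last by ring.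
by rewrite !powRrM (@powR_mulrn _ _ n) ?powR_ge0 // (@powR_mulrn _ _ 2) // exprn_ge0 ?powR_ge0.
Qed.

Unset Implicit Arguments.

Theorem lemma6p1 (R : realType) (d : nat) (ellv : 'rV[R]_d) (lam alpha : R)
  (f : 'I_d -> 'rV[R]_d) :
  (2 <= d)%N -> on_sphere ellv -> 0 < lam -> (d + 3)%:R < alpha ->
  orthonormal_fam f -> (forall i : 'I_d, val i = 0%N -> f i = ellv) ->
  exists c : R, 0 < c /\
    forall (L : R) (omega : config d),
      1 <= L -> sym_config omega -> unique_inf_cluster omega -> Kinf omega 0 ->
      ((c * L `^ (- (2 * d%:R * alpha)))%:E
         * expeR (- (2 * lam)%:E * BKbox omega ellv f L (L `^ alpha))
      <= Lambda omega lam ellv (box ellv f L (L `^ alpha)))%E.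
Proof.
move=> d_ge2 ellv_unit lam_gt0 alpha_gt f_orth f0_ellv.
have d_gt0 : (0 < d)%N by apply: leq_trans d_ge2.
exists ((4 * d)%:R * ((2 * d + 3)%:R ^+ d) ^+ 2 * expR (3 * lam))^-1; split.
  by rewrite invr_gt0 !mulr_gt0 ?expR_gt0 ?exprn_gt0 ?ltr0n ?muln_gt0 ?addn3.
move=> L omega L_ge1 _ _ _.
have L_gt0 : 0 < L by apply: lt_le_trans ltr01 L_ge1.
have alpha_ge1 : 1 <= alpha by apply: le_trans (ltW alpha_gt); rewrite ler1n addn3.
have L_le : L <= L `^ alpha by rewrite -{1}(powRr1 (ltW L_gt0)) ler_powR.
have : (0 <= BKbox omega ellv f L (L `^ alpha))%E.
  by apply/BKbox_ge0/box0 => //; apply: lt_le_trans L_le.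
case BK_eq: (BKbox omega ellv f L (L `^ alpha)) => [r| |] // _; last first.
  by rewrite -EFinN lt0_muley ?mule0 ?Lambda_ge0 // lte_fin oppr_lt0 mulr_gt0.
have BK_le : (BKbox omega ellv f L (L `^ alpha) <= r%:E)%E by rewrite BK_eq.
apply: le_trans (Lambda_box_ge d_gt0 f_orth f0_ellv (ltW lam_gt0) ellv_unit
                   L_gt0 L_le (le_trans L_ge1 L_le) BK_le).
by rewrite -EFinN -EFinM powRN_mul2n ?(ltW L_gt0).
Qed.
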